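(* Let $A_m(x)=R_{2m}(x)$ and $B_m(x)=R_{2m+1}(x)$. For every integer $m\ge 3$, \[ A_m(x)=(1+x+x^2)A_{m-1}(x)-x^2A_{m-2}(x),\qquad B_m(x)=(1+x+x^2)B_{m-1}(x)-x^2B_{m-2}(x). \]
   Context: For $n\ge1$ let $\Xi_n$ be the poset on $\{x_1,\dots,x_n\}$ whose cover relations are exactly: $x_2\prec x_1$, $x_3\prec x_2$, and for $3\le i\le n-1$, $x_i\prec x_{i+1}$ if $i$ is odd and $x_{i+1}\prec x_i$ if $i$ is even (so $x_1>x_2>x_3<x_4>x_5<\cdots$). A filter of a poset is an up-closed subset. $\Omega_n$ is the lattice of filters of $\Xi_n$ under reverse inclusion; $\Omega_0$ is the one-element lattice. $R_n(x)=\sum_{F\in\Omega_n}x^{\,n-|F|}$ is the rank generating function of $\Omega_n$, with $R_0(x)=1$. *)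

From mathcomp Require Import all_boot all_order all_algebra.
Set Implicit Arguments. Unset Strict Implicit. Unset Printing Implicit Defensive.
Import GRing.Theory.
Local Open Scope ring_scope.

(* The element x_{i+1} of Xi_n is represented by (i : 'I_n). *)

(* xi_cov n a b : x_{a+1} is covered by x_{b+1}, i.e. x_{a+1} ≺ x_{b+1}. *)
Definition xi_cov (n : nat) : rel 'I_n := fun a b =>
  let i := (a : nat).+1 in let j := (b : nat).+1 in
  [|| (i == 2%N) && (j == 1%N),
      (i == 3%N) && (j == 2%N),
      [&& (3 <= i)%N, (i.+1 == j)%N & odd i]
    | [&& (3 <= j)%N, (j.+1 == i)%N & ~~ odd j] ].

Definition xi_le (n : nat) (a b : 'I_n) : bool := connect (@xi_cov n) a b.

Definition is_filter (n : nat) (F : {set 'I_n}) : bool :=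
  [forall a, forall b, (a \in F) && xi_le a b ==> (b \in F)].

(* Rank generating function of Omega_n (filters under reverse inclusion). *)
Definition R (n : nat) : {poly int} :=
  \sum_(F : {set 'I_n} | is_filter F) 'X^(n - #|F|).

Definition A (m : nat) : {poly int} := R (2 * m).
Definition B (m : nat) : {poly int} := R (2 * m + 1).

From mathcomp Require Import all_boot all_order all_algebra.
From mathcomp Require Import zify ring.
Set Implicit Arguments. Unset Strict Implicit. Unset Printing Implicit Defensive.
Import GRing.Theory.
Local Open Scope ring_scope.

(* A filter of the fence Xi_n is a 0/1 word in which every cover imposes an
   implication between two consecutive letters.  Hence R_{n+1} splits
   according to whether x_{n+1} lies in the filter, and the two parts evolve
   by a linear transfer rule.  Over two steps starting at an odd position the
   transfer matrix is [[1+x, x], [x^2, x^2]], of trace 1+x+x^2 and determinant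
   x^2, so by Cayley-Hamilton every fixed linear combination of the two parts
   (A_m and B_m among them) satisfies the stated recurrence. *)

Definition memn n (F : {set 'I_n}) (k : nat) : bool := [exists i in F, val i == k].

Lemma memnE n (F : {set 'I_n}) (i : 'I_n) : memn F i = (i \in F).
Proof.
apply/existsP/idP => [[j /andP[jF /eqP/val_inj <-]] //|iF].
by exists i; rewrite iF eqxx.
Qed.

Lemma memn_oversize n (F : {set 'I_n}) k : (n <= k)%N -> memn F k = false.
Proof.
move=> nk; apply/existsP => -[j /andP[_ /eqP jk]].
by have := ltn_ord j; rewrite jk ltnNge nk.
Qed.

Lemma eq_memn n (F G : {set 'I_n}) : memn F =1 memn G -> F = G.
Proof. by move=> FG; apply/setP => i; rewrite -!memnE FG. Qed.

Lemma memn_ord n (F : {set 'I_n}) k (lt_kn : (k < n)%N) :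
  memn F k = (Ordinal lt_kn \in F).
Proof. by rewrite -memnE. Qed.

Definition extend n (F : {set 'I_n}) (b : bool) : {set 'I_n.+1} :=
  [set i : 'I_n.+1 | if val i == n then b else memn F i].

Definition restrict n (F : {set 'I_n.+1}) : {set 'I_n} := [set j : 'I_n | memn F j].

Lemma memn_extend n (F : {set 'I_n}) b k :
  memn (extend F b) k = if k == n then b else memn F k.
Proof.
case: (ltnP k n.+1) => hk; first by rewrite (memn_ord _ hk) inE.
by rewrite !memn_oversize ?gtn_eqF // ltnW.
Qed.

Lemma memn_restrict n (F : {set 'I_n.+1}) k :
  memn (restrict F) k = (k < n)%N && memn F k.
Proof.
case: (ltnP k n) => hk /=; first by rewrite (memn_ord _ hk) inE.
by rewrite memn_oversize.
Qed.

Lemma restrict_extend n (F : {set 'I_n}) b : restrict (extend F b) = F.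
Proof.
apply: eq_memn => k; rewrite memn_restrict memn_extend.
case: (ltnP k n) => hk /=; first by rewrite ltn_eqF.
by rewrite memn_oversize.
Qed.

Lemma extend_restrict n (F : {set 'I_n.+1}) : extend (restrict F) (memn F n) = F.
Proof.
apply: eq_memn => k; rewrite memn_extend memn_restrict.
case: eqP => [-> //|kn]; case: (ltnP k n) => hk //=.
by rewrite memn_oversize //; lia.
Qed.

Lemma card_memn n (F : {set 'I_n}) : #|F| = (\sum_(i < n) memn F i)%N.
Proof.
rewrite -sum1_card big_mkcond /=; apply: eq_bigr => i _.
by rewrite memnE; case: (i \in F).
Qed.

Lemma card_extend n (F : {set 'I_n}) b : #|extend F b| = (#|F| + b)%N.
Proof.
rewrite !card_memn big_ord_recr /= memn_extend eqxx; congr (_ + _)%N.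
by apply: eq_bigr => i _; rewrite memn_extend ltn_eqF.
Qed.

Definition corank n (F : {set 'I_n}) : nat := (n - #|F|)%N.

Lemma corank_extend n (F : {set 'I_n}) b : corank (extend F b) = (corank F + ~~ b)%N.
Proof.
rewrite /corank card_extend.
have := max_card F; rewrite card_ord; case: b => /=; lia.
Qed.

Lemma big_set_last (V : nmodType) n (c : bool) (P : pred {set 'I_n.+1}) (H : {set 'I_n.+1} -> V) :
  \sum_(G | P G && (memn G n == c)) H G = \sum_(F | P (extend F c)) H (extend F c).
Proof.
rewrite (reindex_onto (fun F : {set 'I_n} => extend F c) (@restrict n)) => [|G /andP[_ /eqP <-]].
  by apply: eq_bigl => F; rewrite memn_extend !eqxx restrict_extend eqxx !andbT.
exact: extend_restrict.
Qed.

(* Index k stands for x_{k+1}; [xi_ascends k] says that x_{k+1} < x_{k+2}. *)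
Definition xi_ascends (k : nat) : bool := (2 <= k)%N && ~~ odd k.

Lemma xi_covE n (a b : 'I_n) :
  xi_cov a b = ((val b == (val a).+1) && xi_ascends a)
            || ((val a == (val b).+1) && ~~ xi_ascends b).
Proof.
rewrite /xi_cov /xi_ascends /=; move: (val a) (val b) => i j {a b}.
case: i => [|[|[|i]]]; case: j => [|[|[|j]]] //=.
all: by rewrite ?eqSS ?negbK /= ?andbF // eq_sym ?[_.+1 == _]eq_sym.
Qed.

Definition edge_closed (k : nat) (p q : bool) : bool :=
  if xi_ascends k then p ==> q else q ==> p.

Lemma connect_closedP (T : finType) (e : rel T) (F : {set T}) :
  reflect (forall a b, e a b -> a \in F -> b \in F)
          [forall a, forall b, (a \in F) && connect e a b ==> (b \in F)].
Proof.
apply: (iffP forallP) => [closedF a b ab aF | closedF a].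
  by have /forallP/(_ b) := closedF a; rewrite aF connect1.
apply/forallP => b; apply/implyP => /andP[aF /connectP[p pth ->]] {b}.
elim: p a aF pth => [|c p IH] a aF //= /andP[ac pth].
exact: IH (closedF _ _ ac aF) pth.
Qed.

Lemma is_filterP n (F : {set 'I_n}) :
  reflect (forall k, (k.+1 < n)%N -> edge_closed k (memn F k) (memn F k.+1))
          (is_filter F).
Proof.
apply: (iffP (connect_closedP _ _)) => [closedF k lt_k1n | edgeF a b].
  have lt_kn : (k < n)%N by apply: ltnW.
  rewrite (memn_ord _ lt_kn) (memn_ord _ lt_k1n) /edge_closed.
  by case: ifP => asc; apply/implyP; apply: closedF; rewrite xi_covE /= asc eqxx ?orbT.
rewrite xi_covE -!memnE => /orP[] /andP[/eqP eq_ab asc].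
  have := edgeF a; rewrite -eq_ab ltn_ord /edge_closed asc.
  by move=> /(_ isT)/implyP.
have := edgeF b; rewrite -eq_ab ltn_ord /edge_closed (negbTE asc).
by move=> /(_ isT)/implyP.
Qed.

Lemma is_filter_extend n (F : {set 'I_n.+1}) b :
  is_filter (extend F b) = is_filter F && edge_closed n (memn F n) b.
Proof.
apply/is_filterP/andP => [edgeFb | [/is_filterP edgeF edge_n] k lt_k1n].
  split; last by have := edgeFb n; rewrite !memn_extend eqxx ltn_eqF //; apply.
  by apply/is_filterP => k lt_k1n; have := edgeFb k; rewrite !memn_extend !ltn_eqF //; lia.
rewrite !memn_extend; case: (ltnP k.+1 n.+1) => lt_k1.
  by rewrite (ltn_eqF lt_k1) (ltn_eqF (ltnW lt_k1)); apply: edgeF.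
have -> : k = n by lia.
by rewrite eqxx ltn_eqF.
Qed.

Definition R_last n (c : bool) : {poly int} :=
  \sum_(F : {set 'I_n.+1} | is_filter F && (memn F n == c)) 'X^(corank F).

Lemma R_split n : R n.+1 = R_last n true + R_last n false.
Proof.
rewrite /R (bigID (fun F => memn F n)) /=; congr (_ + _); apply: eq_bigl => F.
  by rewrite eqb_id.
by rewrite eqbF_neg.
Qed.

Lemma R_last_step n c :
  R_last n.+1 c = 'X^(~~ c) * \sum_(d | edge_closed n d c) R_last n d.
Proof.
rewrite {1}/R_last (big_set_last c (@is_filter _)).
under eq_bigl do rewrite is_filter_extend.
under eq_bigr do rewrite corank_extend exprD mulrC.
rewrite -mulr_sumr (partition_big (fun F => memn F n) (edge_closed n ^~ c)) => [|F /andP[] //].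
congr (_ * _); apply: eq_bigr => d ecd; apply: eq_bigl => F.
by case: eqP => [->|]; rewrite ?ecd ?andbT ?andbF.
Qed.

Lemma edge_closed_odd n d c : odd n -> edge_closed n d c = c ==> d.
Proof. by move=> odd_n; rewrite /edge_closed /xi_ascends odd_n andbF. Qed.

Lemma edge_closed_even n d c : odd n -> edge_closed n.+1 d c = d ==> c.
Proof. by case: n => [|n] //= odd_n; rewrite /edge_closed /xi_ascends /= odd_n. Qed.

Lemma R_last_odd_in n : odd n -> R_last n.+1 true = R_last n true.
Proof.
by move=> odd_n; rewrite R_last_step big_mkcond big_bool /= !edge_closed_odd //= mul1r addr0.
Qed.

Lemma R_last_odd_out n : odd n -> R_last n.+1 false = 'X * (R_last n true + R_last n false).
Proof. by move=> odd_n; rewrite R_last_step big_mkcond big_bool /= !edge_closed_odd. Qed.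

Lemma R_last_even_in n : odd n -> R_last n.+2 true = R_last n.+1 true + R_last n.+1 false.
Proof. by move=> odd_n; rewrite R_last_step big_mkcond big_bool /= !edge_closed_even //= mul1r. Qed.

Lemma R_last_even_out n : odd n -> R_last n.+2 false = 'X * R_last n.+1 false.
Proof. by move=> odd_n; rewrite R_last_step big_mkcond big_bool /= !edge_closed_even //= add0r. Qed.

Lemma R_last_period_in n : odd n ->
  R_last n.+2 true = (1 + 'X) * R_last n true + 'X * R_last n false.
Proof.
by move=> odd_n; rewrite R_last_even_in // R_last_odd_in // R_last_odd_out //; ring.
Qed.

Lemma R_last_period_out n : odd n ->
  R_last n.+2 false = 'X^2 * R_last n true + 'X^2 * R_last n false.
Proof. by move=> odd_n; rewrite R_last_even_out // R_last_odd_out //; ring. Qed.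

Lemma A_succE j : A j.+1 = R_last j.*2.+1 true + R_last j.*2.+1 false.
Proof. by rewrite /A mul2n doubleS R_split. Qed.

Lemma B_succE j : B j.+1 = (1 + 'X) * R_last j.*2.+1 true + 'X * R_last j.*2.+1 false.
Proof.
have odd_j21 : odd j.*2.+1 by rewrite /= odd_double.
by rewrite /B addn1 mul2n doubleS R_split R_last_odd_in // R_last_odd_out //; ring.
Qed.

Lemma linear_system2_recurrence (S : comRingType) (a b c d : S) (u v : nat -> S) :
  (forall k, u k.+1 = a * u k + b * v k) ->
  (forall k, v k.+1 = c * u k + d * v k) ->
  forall p q k, p * u k.+2 + q * v k.+2 =
    (a + d) * (p * u k.+1 + q * v k.+1) - (a * d - b * c) * (p * u k + q * v k).
Proof. by move=> uS vS p q k; rewrite (uS k.+1) (vS k.+1) !uS !vS; ring. Qed.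

Theorem mainTheorem3 (m : nat) : (3 <= m)%N ->
  A m = (1 + 'X + 'X^2) * A m.-1 - 'X^2 * A m.-2 /\
  B m = (1 + 'X + 'X^2) * B m.-1 - 'X^2 * B m.-2.
Proof.
case: m => [|[|[|k]]] // _ /=.
pose u j := R_last j.*2.+1 true; pose v j := R_last j.*2.+1 false.
have odd_j21 j : odd j.*2.+1 by rewrite /= odd_double.
have uS j : u j.+1 = (1 + 'X) * u j + 'X * v j by rewrite /u doubleS (R_last_period_in (odd_j21 j)).
have vS j : v j.+1 = 'X^2 * u j + 'X^2 * v j by rewrite /v doubleS (R_last_period_out (odd_j21 j)).
have det : (1 + 'X) * 'X^2 - 'X * 'X^2 = 'X^2 :> {poly int} by ring.
have := linear_system2_recurrence uS vS; rewrite det => rec.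
rewrite !A_succE !B_succE; split.
  by have := rec 1 1 k; rewrite !mul1r.
exact: rec.
Qed.
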